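(* Let $\rho$ be a density operator on $A\otimes B$ with $A\cong B\cong\mathbb{C}^d$, let $0\le\varepsilon\le1$, and let $\sigma = \Delta_\varepsilon(\rho) = (1-\varepsilon)\rho + \frac{\varepsilon}{d^2}I$. Then $D_H^2(\sigma\|\sigma_A\otimes\sigma_B)\le C\sqrt{\varepsilon} + D_H^2(\rho\|\rho_A\otimes\rho_B)$, where the constant can be taken as $C = 4+4\sqrt2$.
   Context: $\rho_A,\rho_B$ (resp. $\sigma_A,\sigma_B$) are partial traces. $D_H^2(\rho\|\sigma) = \mathrm{tr}((\sqrt\rho-\sqrt\sigma)^2)$ is the squared quantum Hellinger distance. *)

(* complex numbers C := R[i] over a realType R
   (mathcomp-real-closed's complex), matrices 'M[C]_(d*d) on A (x) B with
   the Kronecker product tensmx / index convention of real_closed/mxtens. *)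
From mathcomp Require Import all_boot all_algebra.
From mathcomp Require Import reals.
From mathcomp.real_closed Require Export complex mxtens.
From Stdlib Require Import ClassicalEpsilon.

Set Implicit Arguments.
Unset Strict Implicit.
Unset Printing Implicit Defensive.
Import GRing.Theory Num.Theory.
Local Open Scope ring_scope.

Section QDefs.
Variable R : realType.
Local Notation C := (R[i]).

Definition rc (x : R) : C := (x%:C)%C.

Definition adjmx m n (M : 'M[C]_(m, n)) : 'M[C]_(n, m) := (map_mx conjc M)^T.

Definition psdmx n (M : 'M[C]_n) : Prop :=
  adjmx M = M /\ forall v : 'rV[C]_n, 0 <= (v *m M *m adjmx v) 0 0.

Definition density n (M : 'M[C]_n) : Prop := psdmx M /\ \tr M = 1.

Definition sqrtmx n (M : 'M[C]_n) : 'M[C]_n :=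
  epsilon (inhabits 0) (fun X : 'M[C]_n => psdmx X /\ X *m X = M).

Definition hellinger2 n (rho sigma : 'M[C]_n) : C :=
  let D := sqrtmx rho - sqrtmx sigma in \tr (D *m D).

(* partial traces on A (x) B, with |i>|j> indexed by mxtens_index (i, j) *)
Definition trB d1 d2 (M : 'M[C]_(d1 * d2)) : 'M[C]_d1 :=
  \matrix_(i, k) \sum_(j < d2) M (mxtens_index (i, j)) (mxtens_index (k, j)).
Definition trA d1 d2 (M : 'M[C]_(d1 * d2)) : 'M[C]_d2 :=
  \matrix_(j, l) \sum_(i < d1) M (mxtens_index (i, j)) (mxtens_index (i, l)).

Definition depol d (eps : R) (M : 'M[C]_(d * d)) : 'M[C]_(d * d) :=
  rc (1 - eps) *: M + rc (eps / (d ^ 2)%:R) *: 1%:M.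

End QDefs.

(* The Hellinger distance D_H(X, Y) = ||sqrt X - sqrt Y||_2 is a metric, so
   D_H(sigma, sigma_A (x) sigma_B) <= D_H(sigma, rho) + D_H(rho, rho_A (x) rho_B)
   + D_H(rho_A (x) rho_B, sigma_A (x) sigma_B).  Both outer terms are controlled by a
   Powers-Stormer-type bound: ||sqrt X - sqrt Y||_2^2 <= tr Q whenever
   |<v, (X - Y) v>| <= <v, Q v> for all v.  Since sigma - rho = -eps rho + eps/d^2 I and
   the marginals of sigma are (1 - eps) rho_A + eps/d I and (1 - eps) rho_B + eps/d I,
   this gives D_H(sigma, rho)^2 <= 2 eps and D_H(rho_A (x) rho_B, ...)^2 <= 4 eps.
   Finally D_H <= sqrt 2 between states, and b <= a + x with a, b <= sqrt 2 implies
   b^2 <= a^2 + 2 sqrt 2 x. *)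

From mathcomp Require Import all_boot all_order all_algebra.
From mathcomp Require Import reals.
From mathcomp.real_closed Require Import complex mxtens.
From mathcomp Require Import sesquilinear spectral ring lra.
From Stdlib Require Import ClassicalEpsilon.

Set Implicit Arguments.
Unset Strict Implicit.
Unset Printing Implicit Defensive.
Import Order.TTheory GRing.Theory Num.Theory.
Local Open Scope ring_scope.

Section HellingerDepolarizing.
Variable R : realType.
Local Notation C := R[i].
Local Notation rc := (@rc R).
Local Notation "M ^H" := (adjmx M) (at level 8, format "M ^H").

Lemma rc1 : rc 1 = 1. Proof. exact: rmorph1. Qed.
Lemma rc_nat k : rc k%:R = k%:R. Proof. exact: rmorph_nat. Qed.
Lemma rcN (x : R) : rc (- x) = - rc x. Proof. exact: rmorphN. Qed.
Lemma rcD (x y : R) : rc (x + y) = rc x + rc y. Proof. exact: rmorphD. Qed.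
Lemma rcB (x y : R) : rc (x - y) = rc x - rc y. Proof. exact: rmorphB. Qed.
Lemma rcM (x y : R) : rc (x * y) = rc x * rc y. Proof. exact: rmorphM. Qed.
Lemma rcX (x : R) k : rc (x ^+ k) = rc x ^+ k. Proof. exact: rmorphXn. Qed.

Lemma ler_rc (x y : R) : (rc x <= rc y) = (x <= y).
Proof. exact: lecR. Qed.

Lemma rc_ge0 (x : R) : (0 <= rc x) = (0 <= x).
Proof. exact: ler0c. Qed.

Lemma normr_rc (x : R) : `|rc x| = rc `|x|.
Proof. by rewrite normc_def /= expr0n addr0 sqrtr_sqr. Qed.

Lemma sqrtC_rc (x : R) : 0 <= x -> sqrtC (rc x) = rc (Num.sqrt x).
Proof. by move=> x0; rewrite -{1}(sqr_sqrtr x0) rcX sqrCK // rc_ge0 sqrtr_ge0. Qed.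

Lemma rc_Re (z : C) : 0 <= z -> rc (complex.Re z) = z.
Proof. by move=> z0; apply: RRe_real; apply: ger0_real. Qed.

Lemma adjmxE m n (M : 'M[C]_(m, n)) : M^H = (M ^t*)%sesqui.
Proof. by apply/matrixP => i j; rewrite !mxE. Qed.

Lemma adjmxK m n (M : 'M[C]_(m, n)) : M^H^H = M.
Proof. by apply/matrixP => i j; rewrite !mxE conjcK. Qed.

Lemma adjmx_mul m n p (A : 'M[C]_(m, n)) (B : 'M[C]_(n, p)) :
  (A *m B)^H = B^H *m A^H.
Proof. by rewrite /adjmx map_mxM trmx_mul. Qed.

Lemma adjmxD m n (A B : 'M[C]_(m, n)) : (A + B)^H = A^H + B^H.
Proof. by apply/matrixP => i j; rewrite !mxE rmorphD. Qed.

Lemma adjmxN m n (A : 'M[C]_(m, n)) : (- A)^H = - A^H.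
Proof. by apply/matrixP => i j; rewrite !mxE rmorphN. Qed.

Lemma adjmxB m n (A B : 'M[C]_(m, n)) : (A - B)^H = A^H - B^H.
Proof. by rewrite adjmxD adjmxN. Qed.

Lemma adjmxZ m n (a : C) (A : 'M[C]_(m, n)) : (a *: A)^H = a^* *: A^H.
Proof. by apply/matrixP => i j; rewrite !mxE rmorphM. Qed.

Lemma adjmx1 n : (1%:M : 'M[C]_n)^H = 1%:M.
Proof. by apply/matrixP => i j; rewrite !mxE conjc_nat eq_sym. Qed.

Lemma unitarymx_mulVmx n (P : 'M[C]_n) : P \is unitarymx -> P^H *m P = 1%:M.
Proof. by move=> Pu; rewrite -[P^H]mul1mx adjmxE mulmxKtV. Qed.

Lemma unitarymx_mulmxV n (P : 'M[C]_n) : P \is unitarymx -> P *m P^H = 1%:M.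
Proof. by rewrite adjmxE => /unitarymxP. Qed.

(** * Positive semidefinite matrices *)

Definition qform n (M : 'M[C]_n) (v : 'rV[C]_n) : C := (v *m M *m v^H) 0 0.

Lemma qformD n (M N : 'M[C]_n) v : qform (M + N) v = qform M v + qform N v.
Proof. by rewrite /qform mulmxDr mulmxDl mxE. Qed.

Lemma qformN n (M : 'M[C]_n) v : qform (- M) v = - qform M v.
Proof. by rewrite /qform mulmxN mulNmx mxE. Qed.

Lemma qformB n (M N : 'M[C]_n) v : qform (M - N) v = qform M v - qform N v.
Proof. by rewrite qformD qformN. Qed.

Lemma qformZ n (a : C) (M : 'M[C]_n) v : qform (a *: M) v = a * qform M v.
Proof. by rewrite /qform -scalemxAr -scalemxAl mxE. Qed.

Lemma qform_conj m n (W : 'M[C]_(m, n)) (M : 'M[C]_n) v :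
  qform (W *m M *m W^H) v = qform M (v *m W).
Proof. by rewrite /qform adjmx_mul !mulmxA. Qed.

Lemma psd_intro n (M : 'M[C]_n) :
  M^H = M -> (forall v, 0 <= qform M v) -> psdmx M.
Proof. by split. Qed.

Lemma psd_herm n (M : 'M[C]_n) : psdmx M -> M^H = M.
Proof. by case. Qed.

Lemma psd_qform n (M : 'M[C]_n) v : psdmx M -> 0 <= qform M v.
Proof. by case=> _; apply. Qed.

Lemma psd0 n : psdmx (0 : 'M[C]_n).
Proof.
apply: psd_intro => [|v]; first by apply/matrixP => i j; rewrite !mxE conjc0.
by rewrite /qform mulmx0 mul0mx mxE.
Qed.

Lemma psd1 n : psdmx (1%:M : 'M[C]_n).
Proof.
apply: psd_intro => [|v]; first exact: adjmx1.
by rewrite /qform mulmx1 mxE sumr_ge0 // => i _; rewrite !mxE mul_conjC_ge0.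
Qed.

Lemma psdD n (M N : 'M[C]_n) : psdmx M -> psdmx N -> psdmx (M + N).
Proof.
move=> pM pN; apply: psd_intro => [|v]; first by rewrite adjmxD !psd_herm.
by rewrite qformD addr_ge0 ?psd_qform.
Qed.

Lemma psd_sum n I (r : seq I) (F : I -> 'M[C]_n) :
  (forall i, psdmx (F i)) -> psdmx (\sum_(i <- r) F i).
Proof. by move=> pF; apply: big_ind; [exact: psd0 | exact: psdD | move=> i _]. Qed.

Lemma psdZ n (a : C) (M : 'M[C]_n) : 0 <= a -> psdmx M -> psdmx (a *: M).
Proof.
move=> a0 pM; apply: psd_intro => [|v]; last by rewrite qformZ mulr_ge0 ?psd_qform.
by rewrite adjmxZ (psd_herm pM) conj_Creal // ger0_real.
Qed.

Lemma psd_conj m n (W : 'M[C]_(m, n)) (M : 'M[C]_n) :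
  psdmx M -> psdmx (W *m M *m W^H).
Proof.
move=> pM; apply: psd_intro => [|v]; last by rewrite qform_conj psd_qform.
by rewrite !adjmx_mul adjmxK (psd_herm pM) mulmxA.
Qed.

Lemma psd_diag n (t : 'rV[C]_n) : (forall k, 0 <= t 0 k) -> psdmx (diag_mx t).
Proof.
move=> t_ge0; apply: psd_intro => [|v].
  apply/matrixP => i j; rewrite !mxE eq_sym; case: eqVneq => [->|_].
    by rewrite !mulr1n; apply/conj_Creal/ger0_real.
  by rewrite !mulr0n conjc0.
rewrite /qform mul_mx_diag mxE sumr_ge0 // => k _.
by rewrite !mxE mulrAC mulr_ge0 ?mul_conjC_ge0.
Qed.

(** * Spectral decomposition and square roots *)

Lemma herm_spectral n (A : 'M[C]_n) : A^H = A ->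
  A = (spectralmx A)^H *m diag_mx (spectral_diag A) *m spectralmx A.
Proof.
move=> hA; have /orthomx_spectralP eA : A \is normalmx.
  by apply/normalmxP; rewrite -adjmxE hA.
rewrite adjmxE -invmx_unitary; [exact: eA | exact: spectral_unitarymx].
Qed.

Lemma herm_spectral_row n (A : 'M[C]_n) k : A^H = A ->
  row k (spectralmx A) *m A = spectral_diag A 0 k *: row k (spectralmx A).
Proof.
move=> hA; rewrite -row_mul {2}(herm_spectral hA) !mulmxA.
rewrite unitarymx_mulmxV ?spectral_unitarymx // mul1mx.
by rewrite row_mul row_diag_mx -scalemxAl -rowE.
Qed.

Lemma unitarymx_row_norm n (P : 'M[C]_n) k : P \is unitarymx ->
  (row k P *m (row k P)^H) 0 0 = 1.
Proof. by move=> /row_unitarymxP /(_ k k); rewrite dotmxE -adjmxE eqxx. Qed.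

Lemma qform_spectral_row n (A : 'M[C]_n) k : A^H = A ->
  qform A (row k (spectralmx A)) = spectral_diag A 0 k.
Proof.
move=> hA; rewrite /qform herm_spectral_row // -scalemxAl mxE.
by rewrite unitarymx_row_norm ?mulr1 // spectral_unitarymx.
Qed.

Lemma sum_qform_unitary n (P Q : 'M[C]_n) : P \is unitarymx ->
  \sum_k qform Q (row k P) = \tr Q.
Proof.
move=> Pu; rewrite -[in RHS](mul1mx Q) -(unitarymx_mulVmx Pu) -mulmxA mxtrace_mulC.
apply: eq_bigr => k _; rewrite /qform !mxE; apply: eq_bigr => j _; rewrite !mxE.
by congr (_ * _); apply: eq_bigr => l _; rewrite !mxE.
Qed.

Lemma psd_spectral_diag_ge0 n (A : 'M[C]_n) k : psdmx A ->
  0 <= spectral_diag A 0 k.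
Proof. by move=> pA; rewrite -qform_spectral_row ?psd_herm ?psd_qform. Qed.

Lemma psd_sqrt_exists n (A : 'M[C]_n) : psdmx A ->
  exists X, psdmx X /\ X *m X = A.
Proof.
move=> pA; set P := spectralmx A; set s := spectral_diag A.
have Pu : P \is unitarymx := spectral_unitarymx A.
pose t := \row_k sqrtC (s 0 k).
have t_ge0 k : 0 <= t 0 k by rewrite mxE sqrtC_ge0 psd_spectral_diag_ge0.
exists (P^H *m diag_mx t *m P); split.
  by rewrite -{2}(adjmxK P); apply/psd_conj/psd_diag.
have -> : P^H *m diag_mx t *m P *m (P^H *m diag_mx t *m P) =
    P^H *m (diag_mx t *m (P *m P^H) *m diag_mx t) *m P by rewrite !mulmxA.
rewrite unitarymx_mulmxV // mulmx1 mulmx_diag [in RHS](herm_spectral (psd_herm pA)).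
by congr (_ *m diag_mx _ *m _); apply/rowP => k; rewrite !mxE -expr2 sqrtCK.
Qed.

Lemma sqrtmx_spec n (A : 'M[C]_n) : psdmx A ->
  psdmx (sqrtmx A) /\ sqrtmx A *m sqrtmx A = A.
Proof. by move=> /psd_sqrt_exists; apply: epsilon_spec. Qed.

(** * A Powers-Stormer-type bound *)

Definition qform_abs_le n (A Q : 'M[C]_n) := forall v, `|qform A v| <= qform Q v.

Lemma qform_abs_leD n (A A' Q Q' : 'M[C]_n) :
  qform_abs_le A Q -> qform_abs_le A' Q' -> qform_abs_le (A + A') (Q + Q').
Proof. by move=> AQ AQ' v; rewrite !qformD (le_trans (ler_normD _ _)) ?lerD. Qed.

Lemma qform_abs_leN n (A Q : 'M[C]_n) : qform_abs_le A Q -> qform_abs_le (- A) Q.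
Proof. by move=> AQ v; rewrite qformN normrN. Qed.

Lemma qform_abs_le_psdZ n (a : C) (P : 'M[C]_n) :
  psdmx P -> qform_abs_le (a *: P) (`|a| *: P).
Proof. by move=> pP v; rewrite !qformZ normrM (ger0_norm (psd_qform v pP)). Qed.

Lemma qform_abs_le_psdB n (X Y : 'M[C]_n) :
  psdmx X -> psdmx Y -> qform_abs_le (X - Y) (X + Y).
Proof.
move=> pX pY v; rewrite qformB qformD (le_trans (ler_normB _ _)) //.
by rewrite !ger0_norm ?psd_qform.
Qed.

(* X^2 - Y^2 = (X - Y) X + Y (X - Y), so along a unit eigenvector v of X - Y with
   eigenvalue mu the form of X^2 - Y^2 is mu (<Xv, v> + <Yv, v>), whereas that of
   (X - Y)^2 is mu^2 = |mu| |<Xv, v> - <Yv, v>|. *)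
Lemma eigen_qform_sqr_sub_le n (X Y : 'M[C]_n) (v : 'rV[C]_n) (mu : C) :
  psdmx X -> psdmx Y -> v *m (X - Y) = mu *: v -> (v *m v^H) 0 0 = 1 ->
  qform ((X - Y) *m (X - Y)) v <= `|qform (X *m X - Y *m Y) v|.
Proof.
move=> pX pY vD vv; set D := X - Y in vD *.
set a := qform X v; set b := qform Y v.
have a_ge0 : 0 <= a := psd_qform v pX; have b_ge0 : 0 <= b := psd_qform v pY.
have muE : mu = a - b by rewrite -qformB /qform vD -scalemxAl mxE vv mulr1.
have mu_real : mu \is Num.real by rewrite muE rpredB ?ger0_real.
have Dv : D *m v^H = mu *: v^H.
  have hD : D^H = D by rewrite adjmxB !psd_herm.
  by rewrite -{1}hD -adjmx_mul vD adjmxZ; congr (_ *: _); apply: conj_Creal.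
have -> : qform (D *m D) v = mu ^+ 2.
  by rewrite /qform mulmxA vD -scalemxAl vD scalerA -scalemxAl mxE vv mulr1 expr2.
have -> : qform (X *m X - Y *m Y) v = mu * (a + b).
  rewrite (_ : X *m X - Y *m Y = D *m X + Y *m D) ?qformD; last first.
    by rewrite /D mulmxBl mulmxBr addrA subrK.
  have -> : qform (D *m X) v = mu * a.
    by rewrite /qform mulmxA vD -!scalemxAl mxE.
  have -> : qform (Y *m D) v = mu * b.
    by rewrite /qform -!mulmxA Dv -!scalemxAr mxE !mulmxA.
  by rewrite -mulrDr.
rewrite normrM (ger0_norm (addr_ge0 a_ge0 b_ge0)) -(real_normK mu_real) expr2.
rewrite ler_wpM2l // muE (le_trans (ler_normB a b)) //.
by rewrite !ger0_norm.
Qed.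

(* Sum the previous bound over an orthonormal eigenbasis of X - Y. *)
Lemma tr_sqr_sub_le n (X Y Q : 'M[C]_n) : psdmx X -> psdmx Y ->
  qform_abs_le (X *m X - Y *m Y) Q -> \tr ((X - Y) *m (X - Y)) <= \tr Q.
Proof.
move=> pX pY XYQ; have hD : (X - Y)^H = X - Y by rewrite adjmxB !psd_herm.
have Pu := spectral_unitarymx (X - Y).
rewrite -(sum_qform_unitary Q Pu) -(sum_qform_unitary _ Pu); apply: ler_sum => k _.
apply: le_trans (XYQ _); apply: eigen_qform_sqr_sub_le => //.
- exact: herm_spectral_row.
- exact: unitarymx_row_norm.
Qed.

(** * The Hilbert-Schmidt norm and the Hellinger distance *)

Definition hsnorm m n (M : 'M[C]_(m, n)) : R :=
  Num.sqrt (complex.Re (\tr (M *m M^H))).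

Lemma dotmx_mxvec m n (M : 'M[C]_(m, n)) :
  dotmx (mxvec M) (mxvec M) = \tr (M *m M^H).
Proof.
rewrite dotmxE mxE (reindex _ (curry_mxvec_bij m n)) /mxtrace.
under [RHS]eq_bigr => i _ do rewrite mxE.
by rewrite pair_bigA; apply: eq_bigr => -[i j] _; rewrite !mxE mxvecE.
Qed.

Lemma rc_hsnorm_sqr m n (M : 'M[C]_(m, n)) : rc (hsnorm M ^+ 2) = \tr (M *m M^H).
Proof.
have tr_ge0 : 0 <= \tr (M *m M^H) by rewrite -dotmx_mxvec dnorm_ge0.
by rewrite sqr_sqrtr ?rc_Re // -rc_ge0 rc_Re.
Qed.

Lemma rc_hsnorm m n (M : 'M[C]_(m, n)) :
  rc (hsnorm M) = sqrtC (dotmx (mxvec M) (mxvec M)).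
Proof.
rewrite dotmx_mxvec -rc_hsnorm_sqr sqrtC_rc ?sqr_ge0 // sqrtr_sqr.
by rewrite ger0_norm // sqrtr_ge0.
Qed.

Lemma hsnormD m n (M N : 'M[C]_(m, n)) : hsnorm (M + N) <= hsnorm M + hsnorm N.
Proof.
rewrite -ler_rc rcD !rc_hsnorm raddfD.
exact: leif_le (triangle_lerif (@dotmx _ (m * n)) _ _).
Qed.

Lemma mxtrace_herm_sqr n (D : 'M[C]_n) : D^H = D -> \tr (D *m D) = rc (hsnorm D ^+ 2).
Proof. by move=> hD; rewrite rc_hsnorm_sqr hD. Qed.

(* D_H itself rather than D_H^2: unlike [hellinger2] it satisfies the triangle
   inequality. *)
Definition hellinger n (X Y : 'M[C]_n) : R := hsnorm (sqrtmx X - sqrtmx Y).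

Lemma hellinger2E n (X Y : 'M[C]_n) : psdmx X -> psdmx Y ->
  hellinger2 X Y = rc (hellinger X Y ^+ 2).
Proof.
move=> /sqrtmx_spec[pX _] /sqrtmx_spec[pY _].
by apply: mxtrace_herm_sqr; rewrite adjmxB !psd_herm.
Qed.

Lemma hellinger_ge0 n (X Y : 'M[C]_n) : 0 <= hellinger X Y.
Proof. exact: sqrtr_ge0. Qed.

Lemma hellinger_triangle n (X Y Z : 'M[C]_n) :
  hellinger X Z <= hellinger X Y + hellinger Y Z.
Proof.
rewrite /hellinger.
have -> : sqrtmx X - sqrtmx Z = (sqrtmx X - sqrtmx Y) + (sqrtmx Y - sqrtmx Z).
  by rewrite addrA subrK.
exact: hsnormD.
Qed.

Lemma hellinger_sqr_le n (X Y Q : 'M[C]_n) (b : R) : psdmx X -> psdmx Y ->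
  qform_abs_le (X - Y) Q -> \tr Q <= rc b -> hellinger X Y ^+ 2 <= b.
Proof.
move=> pX pY XYQ Qb; rewrite -ler_rc -hellinger2E // (le_trans _ Qb) //.
have [[sX eX] [sY eY]] := (sqrtmx_spec pX, sqrtmx_spec pY).
by apply: tr_sqr_sub_le sX sY _; rewrite eX eY.
Qed.

Lemma hellinger_le_sqrt n (X Y : 'M[C]_n) (c : R) :
  hellinger X Y ^+ 2 <= c -> hellinger X Y <= Num.sqrt c.
Proof.
by move=> le_c; rewrite -(ger0_norm (hellinger_ge0 X Y)) -sqrtr_sqr ler_wsqrtr.
Qed.

Lemma density_dim_gt0 n (M : 'M[C]_n) : density M -> (0 < n)%N.
Proof.
by case: n M => // M [_]; rewrite /mxtrace big_ord0 => /eqP; rewrite eq_sym oner_eq0.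
Qed.

Lemma hellinger_density_le n (X Y : 'M[C]_n) :
  density X -> density Y -> hellinger X Y <= Num.sqrt 2.
Proof.
move=> [pX tX] [pY tY]; apply/hellinger_le_sqrt/(hellinger_sqr_le pX pY).
  exact: qform_abs_le_psdB.
by rewrite mxtraceD tX tY rc_nat.
Qed.

(** * Tensor products and partial traces *)

Lemma adjmx_tens m n p q (A : 'M[C]_(m, n)) (B : 'M[C]_(p, q)) :
  (A *t B)^H = A^H *t B^H.
Proof. by apply/matrixP => i j; rewrite !mxE rmorphM. Qed.

Lemma tensmxDl m n p q (A B : 'M[C]_(m, n)) (D : 'M[C]_(p, q)) :
  (A + B) *t D = A *t D + B *t D.
Proof. by apply/matrixP => i j; rewrite !mxE mulrDl. Qed.

Lemma tensmxDr m n p q (A : 'M[C]_(m, n)) (B D : 'M[C]_(p, q)) :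
  A *t (B + D) = A *t B + A *t D.
Proof. by apply/matrixP => i j; rewrite !mxE mulrDr. Qed.

Lemma tensmxZl m n p q (a : C) (A : 'M[C]_(m, n)) (D : 'M[C]_(p, q)) :
  (a *: A) *t D = a *: (A *t D).
Proof. by apply/matrixP => i j; rewrite !mxE mulrA. Qed.

Lemma tensmxZr m n p q (a : C) (A : 'M[C]_(m, n)) (D : 'M[C]_(p, q)) :
  A *t (a *: D) = a *: (A *t D).
Proof. by apply/matrixP => i j; rewrite !mxE mulrCA. Qed.

Lemma mxtens_index_eq m n (i k : 'I_m) (j l : 'I_n) :
  (mxtens_index (i, j) == mxtens_index (k, l)) = (i == k) && (j == l).
Proof. by rewrite (can_eq (@mxtens_indexK m n)) xpair_eqE. Qed.

Lemma tensmx11 m n : (1%:M : 'M[C]_m) *t (1%:M : 'M[C]_n) = 1%:M.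
Proof.
apply/matrixP => x y.
case: (mxtens_indexP x) => i j; case: (mxtens_indexP y) => k l.
by rewrite tensmxE !mxE mxtens_index_eq; case: eqP; case: eqP; rewrite ?mulr1 ?mulr0.
Qed.

Lemma big_mxtens_index m n (F : 'I_(m * n) -> C) :
  \sum_k F k = \sum_(i < m) \sum_(j < n) F (mxtens_index (i, j)).
Proof.
rewrite pair_big /=; apply: reindex.
by exists (@mxtens_unindex m n) => [[i j] _ | k _]; rewrite ?mxtens_indexK ?mxtens_unindexK.
Qed.

Lemma mxtrace_tens m n (A : 'M[C]_m) (B : 'M[C]_n) :
  \tr (A *t B) = \tr A * \tr B.
Proof. by rewrite /mxtrace mulr_sum; apply: eq_bigr => k _; rewrite !mxE. Qed.

Lemma psd_gram m n (W : 'M[C]_(m, n)) : psdmx (W *m W^H).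
Proof. by rewrite -[W in W *m _]mulmx1; apply: psd_conj; apply: psd1. Qed.

Lemma psd_tens m n (A : 'M[C]_m) (B : 'M[C]_n) :
  psdmx A -> psdmx B -> psdmx (A *t B).
Proof.
move=> /sqrtmx_spec[pa ea] /sqrtmx_spec[pb eb].
rewrite -ea -eb -{2}(psd_herm pa) -{2}(psd_herm pb) -tensmx_mul -adjmx_tens.
exact: psd_gram.
Qed.

Lemma mxtrace_trB m n (M : 'M[C]_(m * n)) : \tr (trB M) = \tr M.
Proof. by rewrite [RHS]/mxtrace big_mxtens_index; apply: eq_bigr => i _; rewrite mxE. Qed.

Lemma mxtrace_trA m n (M : 'M[C]_(m * n)) : \tr (trA M) = \tr M.
Proof.
rewrite [RHS]/mxtrace big_mxtens_index exchange_big.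
by apply: eq_bigr => j _; rewrite mxE.
Qed.

Lemma psd_mxsub m n (f : 'I_m -> 'I_n) (M : 'M[C]_n) :
  psdmx M -> psdmx (mxsub f f M).
Proof.
have adjS : (rowsub f 1%:M : 'M[C]_(m, n))^H = colsub f 1%:M.
  by apply/matrixP => i j; rewrite !mxE conjc_nat eq_sym.
move=> pM; rewrite mxsubcr rowsubE -[rowsub f 1%:M *m M]mulmx1 -mulmx_colsub -adjS.
exact: psd_conj.
Qed.

Lemma psd_trB m n (M : 'M[C]_(m * n)) : psdmx M -> psdmx (trB M).
Proof.
move=> pM; pose f (j : 'I_n) (i : 'I_m) := mxtens_index (i, j).
have -> : trB M = \sum_j mxsub (f j) (f j) M.
  by apply/matrixP => i k; rewrite !mxE summxE; apply: eq_bigr => j _; rewrite mxE.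
by apply: psd_sum => j; apply: psd_mxsub.
Qed.

Lemma psd_trA m n (M : 'M[C]_(m * n)) : psdmx M -> psdmx (trA M).
Proof.
move=> pM; pose f (i : 'I_m) (j : 'I_n) := mxtens_index (i, j).
have -> : trA M = \sum_i mxsub (f i) (f i) M.
  by apply/matrixP => j l; rewrite !mxE summxE; apply: eq_bigr => i _; rewrite mxE.
by apply: psd_sum => i; apply: psd_mxsub.
Qed.

Definition tens_marg m n (M : 'M[C]_(m * n)) := trB M *t trA M.

Lemma density_tens_marg m n (M : 'M[C]_(m * n)) : density M -> density (tens_marg M).
Proof.
move=> [pM tM]; split; first by apply: psd_tens; [apply: psd_trB | apply: psd_trA].
by rewrite mxtrace_tens mxtrace_trB mxtrace_trA tM mulr1.
Qed.

Lemma trB_scale_add1 m n (a b : C) (M : 'M[C]_(m * n)) :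
  trB (a *: M + b *: 1%:M) = a *: trB M + (b * n%:R) *: 1%:M.
Proof.
apply/matrixP => i k; rewrite !mxE.
under eq_bigr => j _ do rewrite !mxE mxtens_index_eq eqxx andbT.
by rewrite big_split /= -mulr_sumr sumr_const card_ord mulr_natr mulrnAl.
Qed.

Lemma trA_scale_add1 m n (a b : C) (M : 'M[C]_(m * n)) :
  trA (a *: M + b *: 1%:M) = a *: trA M + (b * m%:R) *: 1%:M.
Proof.
apply/matrixP => j l; rewrite !mxE.
under eq_bigr => i _ do rewrite !mxE mxtens_index_eq eqxx.
by rewrite big_split /= -mulr_sumr sumr_const card_ord mulr_natr mulrnAl.
Qed.

(** * The depolarizing channel *)

Lemma density_sqr_dim_gt0 d (M : 'M[C]_(d * d)) : density M -> (0 < d)%N.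
Proof. by move/density_dim_gt0; rewrite muln_gt0 andbb. Qed.

Lemma sqr_nat_divrK d (x : R) : (0 < d)%N -> x / (d ^ 2)%:R * d%:R * d%:R = x.
Proof.
by move=> d_gt0; rewrite -mulrA -natrM mulnn mulfVK // pnatr_eq0 -lt0n expn_gt0 d_gt0.
Qed.

Lemma density_depol d (eps : R) (M : 'M[C]_(d * d)) :
  0 <= eps <= 1 -> density M -> density (depol eps M).
Proof.
move=> /andP[e0 e1] dM; have [pM tM] := dM; have d_gt0 := density_sqr_dim_gt0 dM.
split.
  apply: psdD; apply: psdZ; [ | exact: pM | | exact: psd1].
    by rewrite rc_ge0 subr_ge0.
  by rewrite rc_ge0 divr_ge0.
rewrite mxtraceD !mxtraceZ tM mxtrace1 mulr1 natrM mulrA -!rc_nat -!rcM -rcD.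
by rewrite sqr_nat_divrK // subrK rc1.
Qed.

Lemma qform_abs_le_psd_rc n (x : R) (P : 'M[C]_n) :
  psdmx P -> qform_abs_le (rc x *: P) (rc `|x| *: P).
Proof. by rewrite -normr_rc; apply: qform_abs_le_psdZ. Qed.

Lemma hellinger_depol_le d (eps : R) (M : 'M[C]_(d * d)) :
  0 <= eps <= 1 -> density M -> hellinger (depol eps M) M <= Num.sqrt 2 * Num.sqrt eps.
Proof.
move=> he dM; have [[pS _] [pM tM]] := (density_depol he dM, dM).
have /andP[e0 _] := he; have d_gt0 := density_sqr_dim_gt0 dM.
set c := eps / (d ^ 2)%:R.
rewrite -sqrtrM //; apply: hellinger_le_sqrt.
apply: (@hellinger_sqr_le _ _ _ (rc `|- eps| *: M + rc `|c| *: 1%:M)) => //.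
  have -> : depol eps M - M = rc (- eps) *: M + rc c *: 1%:M.
    by rewrite /depol addrAC -{2}(scale1r M) -scalerBl rcB rc1 addrAC subrr add0r rcN.
  apply: qform_abs_leD; apply: qform_abs_le_psd_rc; [exact: pM | exact: psd1].
rewrite normrN !ger0_norm ?divr_ge0 // mxtraceD !mxtraceZ tM mxtrace1 mulr1 natrM.
by rewrite mulrA -!rc_nat -!rcM -rcD sqr_nat_divrK // ler_rc mulr2n mulrDl mul1r.
Qed.

Lemma tens_affine_sub m (A B : 'M[C]_m) (a b : C) :
  (a *: A + b *: 1%:M) *t (a *: B + b *: 1%:M) - A *t B =
  (a * a - 1) *: (A *t B) + (a * b) *: (A *t 1%:M + 1%:M *t B) + (b * b) *: 1%:M.
Proof.
rewrite tensmxDl !tensmxZl !tensmxDr !tensmxZr tensmx11 !scalerDr !scalerA.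
rewrite scalerBl scale1r [b * a]mulrC !addrA.
by rewrite !(addrAC _ (- (A *t B))).
Qed.

Lemma qform_abs_le_tens_affine m (A B : 'M[C]_m) (a b : R) : psdmx A -> psdmx B ->
  qform_abs_le ((rc a *: A + rc b *: 1%:M) *t (rc a *: B + rc b *: 1%:M) - A *t B)
    (rc `|a * a - 1| *: (A *t B) + rc `|a * b| *: (A *t 1%:M + 1%:M *t B)
     + rc `|b * b| *: 1%:M).
Proof.
move=> pA pB; have p1 := @psd1 m.
have rc_sub1 : rc (a * a) - 1 = rc (a * a - 1) by rewrite rcB rc1.
rewrite tens_affine_sub -!rcM rc_sub1.
apply: qform_abs_leD; [apply: qform_abs_leD | ]; apply: qform_abs_le_psd_rc.
- exact: psd_tens.
- by apply: psdD; apply: psd_tens.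
- exact: psd1.
Qed.

Lemma tens_marg_depol d (eps : R) (M : 'M[C]_(d * d)) :
  tens_marg (depol eps M) =
  (rc (1 - eps) *: trB M + rc (eps / (d ^ 2)%:R * d%:R) *: 1%:M) *t
  (rc (1 - eps) *: trA M + rc (eps / (d ^ 2)%:R * d%:R) *: 1%:M).
Proof. by rewrite /tens_marg /depol trB_scale_add1 trA_scale_add1 -rc_nat -rcM. Qed.

Lemma hellinger_tens_marg_depol_le d (eps : R) (M : 'M[C]_(d * d)) :
  0 <= eps <= 1 -> density M ->
  hellinger (tens_marg M) (tens_marg (depol eps M)) <= 2 * Num.sqrt eps.
Proof.
move=> he dM; have /andP[e0 e1] := he; have d_gt0 := density_sqr_dim_gt0 dM.
have [[pT _] [pS _]] := (density_tens_marg dM, density_tens_marg (density_depol he dM)).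
have [pM tM] := dM; rewrite tens_marg_depol in pS *.
have sqrt4 : Num.sqrt 4 = 2 :> R by rewrite -[RHS]ger0_norm // -sqrtr_sqr expr2 -natrM.
rewrite -sqrt4 -sqrtrM //; apply: hellinger_le_sqrt; apply: hellinger_sqr_le pT pS _ _.
  rewrite -opprB; apply/qform_abs_leN/qform_abs_le_tens_affine.
    exact: psd_trB.
  exact: psd_trA.
(* With b d = eps, the trace of the dominating matrix is 4 eps - 2 eps^2. *)
rewrite !(mxtraceD, mxtraceZ, mxtrace_tens) mxtrace_trB mxtrace_trA tM !mxtrace1.
rewrite !(mul1r, mulr1) natrM -!rc_nat -!rcD -!rcM -!rcD ler_rc.
have bd := sqr_nat_divrK eps d_gt0.
have b0 : 0 <= eps / (d ^ 2)%:R * d%:R by rewrite !mulr_ge0 ?invr_ge0.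
move: (d%:R : R) (eps / (d ^ 2)%:R * d%:R) bd b0 => n b bn b0.
have a1 : (1 - eps) * (1 - eps) <= 1 by rewrite mulr_ile1 // ?subr_ge0 // lerBlDr lerDl.
rewrite ler0_norm ?subr_le0 // !ger0_norm ?mulr_ge0 ?subr_ge0 //.
have -> : b * b * (n * n) = (b * n) ^+ 2 by ring.
have -> : (1 - eps) * b * (n + n) = 2 * (1 - eps) * (b * n) by ring.
rewrite bn; nra.
Qed.

Lemma sqr_le_sqr_add (r a b x : R) : 0 <= a -> a <= r -> 0 <= b -> b <= r ->
  0 <= x -> b <= a + x -> b ^+ 2 <= a ^+ 2 + 2 * r * x.
Proof. by move=> a0 ar b0 br x0 bax; case: (lerP b a) => [ba | ab]; nra. Qed.

End HellingerDepolarizing.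

Theorem lemma4p4 (R : realType) (d : nat) (rho : 'M[R[i]]_(d * d)) (eps : R) :
  density rho -> 0 <= eps <= 1 ->
  let sigma := depol eps rho in
  hellinger2 sigma (tensmx (trB sigma) (trA sigma))
  <= rc ((4 + 4 * Num.sqrt 2) * Num.sqrt eps)
     + hellinger2 rho (tensmx (trB rho) (trA rho)).
Proof.
move=> rho_dens eps01; rewrite [X in is_true X]/=; set sigma := depol eps rho.
rewrite -/(tens_marg sigma) -/(tens_marg rho).
have sigma_dens : density sigma := density_depol eps01 rho_dens.
have [trho_dens tsigma_dens] := (density_tens_marg rho_dens, density_tens_marg sigma_dens).
rewrite (hellinger2E sigma_dens.1 tsigma_dens.1) (hellinger2E rho_dens.1 trho_dens.1).
rewrite -rcD ler_rc addrC.
have triangle : hellinger sigma (tens_marg sigma) <= hellinger rho (tens_marg rho)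
    + (hellinger sigma rho + hellinger (tens_marg rho) (tens_marg sigma)).
  rewrite addrCA; apply: le_trans (hellinger_triangle sigma rho _) (lerD (lexx _) _).
  exact: hellinger_triangle.
have outer_le : hellinger sigma rho + hellinger (tens_marg rho) (tens_marg sigma)
    <= (Num.sqrt 2 + 2) * Num.sqrt eps.
  rewrite mulrDl; apply: lerD; first exact: hellinger_depol_le eps01 rho_dens.
  exact: hellinger_tens_marg_depol_le eps01 rho_dens.
apply: le_trans (sqr_le_sqr_add _ _ _ _ _ triangle) _.
- exact: hellinger_ge0.
- exact: hellinger_density_le.
- exact: hellinger_ge0.
- exact: hellinger_density_le.
- by rewrite addr_ge0 ?hellinger_ge0.
rewrite lerD2l (le_trans (ler_wpM2l _ outer_le)) ?mulr_ge0 ?sqrtr_ge0 // mulrA.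
have -> : 2 * Num.sqrt 2 * (Num.sqrt 2 + 2) = 4 + 4 * Num.sqrt 2 :> R.
  by rewrite mulrDr -mulrA -expr2 sqr_sqrtr //; ring.
exact: lexx.
Qed.
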